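(* Let $I$ be a semigroup (or a monoid). Let $S$ be a set and for each $s\in S$ let $(B_s,\beta(s))$ be a semi-invertible $I$-set. Let $B=\prod_{s\in S}B_s$ with the $I$-action given by $\beta(s)$ on the $s$-th component. Let $(A,\alpha)$ and $(C,\gamma)$ be $I$-sets and let $f:A\to B$ and $g:B\to C$ be $I$-equivariant functions. Then $g\circ f:A\to C$ is $I$-equivariant.
   Context: For a set $X$, $\mathrm{End}_l(X)$ denotes self-maps of $X$ written on the left with product $f\circ g$ ($g$ first); $\mathrm{End}_r(X)$ denotes self-maps written on the right, $x\mapsto(x)f$, with $(x)(fg)=((x)f)g$. An $I$-set is a set $X$ with a pair $\xi=(\xi_l,\xi_r)$ of semigroup (resp. monoid) homomorphisms $\xi_l:I\to\mathrm{End}_l(X)$, $\xi_r:I\to\mathrm{End}_r(X)$ with $(\xi_l(i)(x))\xi_r(j)=\xi_l(i)((x)\xi_r(j))$ for all $i,j,x$. A function $f:X\to Y$ between $I$-sets $(X,\xi)$, $(Y,\eta)$ is $I$-equivariant if $(f(\xi_l(i)(x)))\eta_r(i)=\eta_l(i)(f((x)\xi_r(i)))$ for all $i\in I$, $x\in X$. An $I$-set $(X,\xi)$ is semi-invertible if for every $i\in I$, at least one of $\xi_l(i)$, $\xi_r(i)$ is a bijection of $X$. The product action on $\prod_s B_s$ is componentwise: $\beta_l(i)((b_s)_s)=(\beta(s)_l(i)(b_s))_s$ and $((b_s)_s)\beta_r(i)=((b_s)\beta(s)_r(i))_s$. *)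

From mathcomp Require Import ssreflect ssrfun ssrbool.
Set Implicit Arguments. Unset Strict Implicit. Unset Printing Implicit Defensive.

(* Left actions xl : I -> X -> X are maps written on the left (End_l(X));
   right actions xr : I -> X -> X with  xr i x  standing for  (x) xr(i)  (End_r(X)). *)

Definition hom_l (I X : Type) (op : I -> I -> I) (xl : I -> X -> X) : Prop :=
  forall i j x, xl (op i j) x = xl i (xl j x).

Definition hom_r (I X : Type) (op : I -> I -> I) (xr : I -> X -> X) : Prop :=
  forall i j x, xr (op i j) x = xr j (xr i x).

Definition is_Iset (I X : Type) (op : I -> I -> I) (xl xr : I -> X -> X) : Prop :=
  [/\ hom_l op xl, hom_r op xr &
      forall i j x, xr j (xl i x) = xl i (xr j x)].

Definition semi_invertible (I X : Type) (xl xr : I -> X -> X) : Prop :=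
  forall i, bijective (xl i) \/ bijective (xr i).

Definition equivariant (I X Y : Type) (xl xr : I -> X -> X) (yl yr : I -> Y -> Y)
  (f : X -> Y) : Prop :=
  forall i x, yr i (f (xl i x)) = yl i (f (xr i x)).

Definition prod_act (I S : Type) (B : S -> Type) (bt : forall s, I -> B s -> B s)
  : I -> (forall s, B s) -> (forall s, B s) :=
  fun i b s => bt s i (b s).

From mathcomp Require Import ssreflect ssrfun ssrbool.
From Stdlib Require Import ClassicalEpsilon FunctionalExtensionality.

(* If [f] is equivariant then [u := f (xl i a)] and [v := f (xr i a)] satisfy
   [yr i u = yl i v].  When every such pair is of the form [(yl i w, yr i w)],
   equivariance of [g] at [w] gives [zr i (g u) = zl i (g v)].  Semi-invertible
   I-sets have this lifting property, and it passes to products componentwise. *)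

Definition liftable {I Y : Type} (yl yr : I -> Y -> Y) : Prop :=
  forall i u v, yr i u = yl i v -> exists w, yl i w = u /\ yr i w = v.

Lemma equivariant_comp (I X Y Z : Type) (xl xr : I -> X -> X)
    (yl yr : I -> Y -> Y) (zl zr : I -> Z -> Z) (f : X -> Y) (g : Y -> Z) :
  liftable yl yr -> equivariant xl xr yl yr f -> equivariant yl yr zl zr g ->
  equivariant xl xr zl zr (g \o f).
Proof.
move=> hY hf hg i x /=.
have [w [<- <-]] := hY i _ _ (hf i x).
exact: hg.
Qed.

Lemma semi_invertible_liftable (I Y : Type) (yl yr : I -> Y -> Y) :
  (forall i y, yr i (yl i y) = yl i (yr i y)) ->
  semi_invertible yl yr -> liftable yl yr.
Proof.
move=> comm hsi i u v E.
case: (hsi i) => [[h hK Kh]|[h hK Kh]].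
- exists (h u); split; first by rewrite Kh.
  by apply: (can_inj hK); rewrite -comm Kh.
- exists (h v); split; last by rewrite Kh.
  by apply: (can_inj hK); rewrite comm Kh.
Qed.

Lemma prod_act_liftable (I S : Type) (B : S -> Type)
    (bl br : forall s, I -> B s -> B s) :
  (forall s, liftable (bl s) (br s)) -> liftable (prod_act bl) (prod_act br).
Proof.
move=> hB i u v E.
have lift s : exists w, bl s i w = u s /\ br s i w = v s.
  by apply: hB; exact: (f_equal (fun b => b s) E).
pose w s := proj1_sig (constructive_indefinite_description _ (lift s)).
have wP s : bl s i (w s) = u s /\ br s i (w s) = v s.
  exact: proj2_sig (constructive_indefinite_description _ (lift s)).
by exists w; split; apply: functional_extensionality_dep => s; case: (wP s).
Qed.

Theorem mainTheorem4
  (I : Type) (op : I -> I -> I) (op_assoc : associative op)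
  (S : Type) (B : S -> Type) (bl br : forall s, I -> B s -> B s)
  (hB : forall s, is_Iset op (bl s) (br s))
  (hBsi : forall s, semi_invertible (bl s) (br s))
  (A : Type) (al ar : I -> A -> A) (hA : is_Iset op al ar)
  (C : Type) (cl cr : I -> C -> C) (hC : is_Iset op cl cr)
  (f : A -> (forall s, B s)) (g : (forall s, B s) -> C)
  (hf : equivariant al ar (prod_act bl) (prod_act br) f)
  (hg : equivariant (prod_act bl) (prod_act br) cl cr g) :
  equivariant al ar cl cr (g \o f).
Proof.
apply: equivariant_comp hf hg; apply: prod_act_liftable => s.
apply: semi_invertible_liftable (hBsi s) => i y.
by case: (hB s) => _ _ ->.
Qed.
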